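(* Let $G$ be a perfect matching on $n=pq$ vertices $u_iw_j$ ($1\le i\le p$, $1\le j\le q$; $n$ even). Then $\Delta(G)=\Delta(G^{\Gamma_B})$ if and only if $G^{\Gamma_B}$ is a perfect matching. Moreover, if this holds, then the subgraph $G_2$ of $G$ consisting of its entangled edges and the subgraph $G_4$ of $G^{\Gamma_B}$ consisting of its entangled edges have the same set of non-isolated vertices, i.e. both are perfect entangling matchings on the same vertex subset. In particular, a perfect entangling matching $G$ on these vertices satisfies $\Delta(G)=\Delta(G^{\Gamma_B})$ iff $G^{\Gamma_B}$ is also a perfect entangling matching.
   Context: A perfect matching is a simple graph in which every vertex lies in exactly one edge. An edge $\{u_iw_j,u_{i'}w_{j'}\}$ is entangled if $i\ne i'$ and $j\ne j'$, and unentangled otherwise. A perfect entangling matching (on a vertex set) is a perfect matching all of whose edges are entangled. $\Delta(G)$ denotes the diagonal degree matrix. The partial transpose $G^{\Gamma_B}$ has the same vertex set, and $\{u_iw_j,u_kw_l\}$ is an edge of $G^{\Gamma_B}$ iff $\{u_iw_l,u_kw_j\}$ is an edge of $G$. *)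

From mathcomp Require Import all_boot.
Set Implicit Arguments. Unset Strict Implicit. Unset Printing Implicit Defensive.

(* Vertices u_i w_j are pairs (i, j) : 'I_p * 'I_q.
   A simple graph on them is a symmetric irreflexive relation. *)
Section Defs.
Variables p q : nat.
Definition vtx := ('I_p * 'I_q)%type.

Definition simple_graph (e : rel vtx) : Prop :=
  symmetric e /\ irreflexive e.

Definition nbhd (e : rel vtx) (x : vtx) : {set vtx} := [set y | e x y].
Definition deg (e : rel vtx) (x : vtx) : nat := #|nbhd e x|.

(* Delta(G): the diagonal degree matrix, represented by its diagonal *)
Definition Delta (e : rel vtx) : {ffun vtx -> nat} := [ffun x => deg e x].

Definition perfect_matching (e : rel vtx) : Prop :=
  forall x, deg e x = 1%N.

Definition entangled (x y : vtx) : bool := (x.1 != y.1) && (x.2 != y.2).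

Definition perfect_entangling_matching (e : rel vtx) : Prop :=
  perfect_matching e /\ (forall x y, e x y -> entangled x y).

Definition perfect_entangling_matching_on (e : rel vtx) (S : {set vtx}) : Prop :=
  [/\ forall x, x \in S -> deg e x = 1%N,
      forall x, x \notin S -> nbhd e x = set0
    & forall x y, e x y -> entangled x y].

(* partial transpose: {u_i w_j, u_k w_l} is an edge of G^Gamma_B iff
   {u_i w_l, u_k w_j} is an edge of G (and the two endpoints are distinct) *)
Definition ptrans (e : rel vtx) : rel vtx :=
  fun x y => (x != y) && e (x.1, y.2) (y.1, x.2).

Definition entangled_part (e : rel vtx) : rel vtx :=
  fun x y => e x y && entangled x y.
End Defs.

From mathcomp Require Import all_boot.
Set Implicit Arguments. Unset Strict Implicit. Unset Printing Implicit Defensive.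

(* The partial transpose of a simple graph leaves its unentangled pairs
   untouched, so G and G^Gamma_B have the same unentangled edges. Since every
   degree of G is 1, Delta(G) = Delta(G^Gamma_B) just says that G^Gamma_B is a
   perfect matching. In a perfect matching a vertex lies on an entangled edge
   iff it has no unentangled neighbour, a condition that only involves the
   shared unentangled edges; hence the entangled parts of G and G^Gamma_B
   cover the same vertices. *)

Section PartialTranspose.
Variables p q : nat.
Implicit Types (e f : rel (vtx p q)) (x y : vtx p q).

Definition entangled_support e : {set vtx p q} :=
  [set x | [exists y, entangled_part e x y]].

Lemma deg_eq1P e x : deg e x = 1 -> exists w, forall y, e x y = (y == w).
Proof.
move=> /eqP /cards1P [w /setP Hw]; exists w => y.
by have := Hw y; rewrite !inE.
Qed.

Lemma ptrans_unentangled e x y :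
  simple_graph e -> ~~ entangled x y -> ptrans e x y = e x y.
Proof.
case=> e_sym e_irr; case: x y => [a b] [c d]; rewrite /ptrans /entangled /=.
have [-> | neq_xy] := eqVneq (a, b) (c, d); first by rewrite e_irr.
by rewrite negb_and !negbK => /orP [] /eqP <-; rewrite // e_sym.
Qed.

Lemma Delta_eq_perfect_matching e f :
  perfect_matching e -> (Delta e = Delta f <-> perfect_matching f).
Proof.
move=> pm_e; split=> [/ffunP eq_deg x | pm_f].
  by have := eq_deg x; rewrite !ffunE pm_e.
by apply/ffunP => x; rewrite !ffunE pm_e pm_f.
Qed.

Lemma perfect_matching_entangled_support e x : perfect_matching e ->
  (x \in entangled_support e) = ~~ [exists y, e x y && ~~ entangled x y].
Proof.
move=> pm_e; have [w ew] := deg_eq1P (pm_e x).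
rewrite inE; apply/existsP/existsPn => [[y] | no_unent].
  rewrite /entangled_part ew => /andP [/eqP -> ent_xw] z.
  by rewrite ew; case: eqP => // ->; rewrite ent_xw.
by exists w; have := no_unent w; rewrite /entangled_part ew eqxx negbK.
Qed.

Lemma entangled_part_pem_on e : perfect_matching e ->
  perfect_entangling_matching_on (entangled_part e) (entangled_support e).
Proof.
move=> pm_e; split=> [x | x | x y /andP [] //].
  rewrite inE => /existsP [y]; have [w ew] := deg_eq1P (pm_e x).
  rewrite /entangled_part ew => /andP [/eqP -> ent_xw].
  rewrite /deg (_ : nbhd _ x = [set w]) ?cards1 //.
  by apply/setP => z; rewrite !inE /entangled_part ew; case: eqP => // ->.
rewrite inE => /existsPn no_ent; apply/setP => z; rewrite !inE.
exact: negbTE.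
Qed.

Lemma entangled_support_ptrans e : simple_graph e ->
  perfect_matching e -> perfect_matching (ptrans e) ->
  entangled_support (ptrans e) = entangled_support e.
Proof.
move=> sg pm_e pm_pe; apply/setP => x.
rewrite !perfect_matching_entangled_support //; congr (~~ _).
apply/eq_existsb => y; case: (boolP (entangled x y)); first by rewrite !andbF.
by move=> unent; rewrite ptrans_unentangled.
Qed.

End PartialTranspose.

Theorem mainTheorem6 (p q : nat) (e : rel (vtx p q)) :
  simple_graph e -> perfect_matching e ->
  (Delta e = Delta (ptrans e) <-> perfect_matching (ptrans e)) /\
  (Delta e = Delta (ptrans e) ->
     exists S : {set vtx p q},
       perfect_entangling_matching_on (entangled_part e) S /\
       perfect_entangling_matching_on (entangled_part (ptrans e)) S) /\
  (perfect_entangling_matching e ->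
     (Delta e = Delta (ptrans e) <-> perfect_entangling_matching (ptrans e))).
Proof.
move=> sg pm_e; have Delta_pm := Delta_eq_perfect_matching (ptrans e) pm_e.
split=> //; split.
  move=> /Delta_pm pm_pe; exists (entangled_support e).
  split; first exact: entangled_part_pem_on.
  rewrite -entangled_support_ptrans //; exact: entangled_part_pem_on.
case=> _ e_ent; split=> [/Delta_pm pm_pe | [/Delta_pm //]].
split=> // x y pe_xy; apply/negPn/negP => unent.
by move: (e_ent x y); rewrite -ptrans_unentangled // pe_xy (negbTE unent) => /(_ isT).
Qed.
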